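(* Let $X$ and $Y$ be cellular spaces, $X$ compact, $r\ge0$, and $a,b\colon X\to Y$ maps. If $a$ is firmly $r$-similar to $b$, then $a\overset{r}{\approx}b$.
   Context: Cellular space = based CW complex; maps based unless called unbased. $\langle W\rangle$ = free abelian group on a set $W$. $Y^X$ = based maps (compact-open); $Y^X_a$ = path component of $a$, regarded as based at $a$; $V\mapsto V|_R$ restriction; $\mathcal F_n(X)$ = finite $R\subseteq X$ containing the basepoint with $|R|\le n+1$; $\langle Y^X\rangle^{(s)}=\{V:V|_R=0\ \forall R\in\mathcal F_{s-1}(X)\}$. For unbased $U,V$: $V^{(U)}$ = unbased maps; $\Xi^U(v)$ = constant map at $v$; for $U=\coprod_iU_i$, $\boxed{\sqcup}_i\langle w_i\rangle=\langle w\rangle$, $w|_{U_i}=w_i$, multilinearly. For nonempty finite $E$: simplex $\Delta E$, faces $\Delta F$; layouts = sets $A$ of pairwise disjoint nonempty subsets; $\Delta[A]=\coprod_{F\in A}\Delta F$; $S\in\langle V^{(\Delta E)}\rangle$ fissile if $S|_{\Delta[A]}=\boxed{\sqcup}_{F\in A}S|_{\Delta F}$ for all layouts. $U\wr X=(U\times X)/(U\times\{x_0\})$, $\#^X(w)(u\wr x)=w(u)(x)$, $\langle (Y^X)^{(U)}\rangle^{(s)}_X=\langle\#^X\rangle^{-1}\langle Y^{U\wr X}\rangle^{(s)}$. $a\overset{r}{\approx}b$ iff for each nonempty finite $E$ there is a fissile $S\in\langle (Y^X_a)^{(\Delta E)}\rangle$ with $\langle\Xi^{\Delta E}(b)\rangle-S\in\langle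 (Y^X)^{(\Delta E)}\rangle^{(r+1)}_X$. Cone $\check CU=(U\times[0,1])/(U\times\{0\})$ based at the apex, $U=U\times\{1\}\subseteq\check CU$; $\check C\Delta[A]=\bigvee_{F\in A}\check C\Delta F\subseteq\check C\Delta E$. $\langle (Y^X_a)^T\rangle$: generated by based maps $T\to(Y^X_a,a)$. Combining product of based maps $\boxed{\vee}_F\langle v_F\rangle=\langle\bar\bigvee_Fv_F\rangle$. $R\in\langle (Y^X_a)^{\check C\Delta E}\rangle$ is fissile if $R|_{\check C\Delta[A]}=\boxed{\vee}_{F\in A}R|_{\check C\Delta F}$ for all layouts $A$. $a$ is firmly $r$-similar to $b$ if for every nonempty finite $E$ there is a fissile $R\in\langle (Y^X_a)^{\check C\Delta E}\rangle$ with $\langle\Xi^{\Delta E}(b)\rangle-R|_{\Delta E}\in\langle (Y^X)^{(\Delta E)}\rangle^{(r+1)}_X$ ($R|_{\Delta E}$ is restriction to the base $\Delta E\subseteq\check C\Delta E$, as unbased maps). *)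

From Stdlib Require List.
From HB Require Import structures.
From mathcomp Require Import all_ssreflect all_algebra.
From mathcomp Require Import all_classical all_reals all_analysis.
Set Implicit Arguments. Unset Strict Implicit. Unset Printing Implicit Defensive.
Import Order.TTheory GRing.Theory Num.Theory.
Import numFieldNormedType.Exports numFieldTopology.Exports.
Local Open Scope classical_set_scope.
Local Open Scope ring_scope.

(* Free abelian group <W> on the elements of a type W, as formal       *)
(* Z-linear combinations (finite lists of (coefficient, generator)),   *)
(* two combinations being equal iff all their coefficients agree.      *)
Definition fsum (W : Type) := seq (int * W).
Definition fcoef (W : Type) (V : fsum W) (w : W) : int :=
  \sum_(p <- V) (if `[< p.2 = w >] then p.1 else 0).
Definition feq (W : Type) (V V' : fsum W) : Prop := forall w, fcoef V w = fcoef V' w.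
Definition fzero (W : Type) (V : fsum W) : Prop := forall w, fcoef V w = 0.
Definition fgen (W : Type) (w : W) : fsum W := [:: (1%:Z, w)].
Definition fsub (W : Type) (V V' : fsum W) : fsum W :=
  V ++ [seq (- p.1, p.2) | p <- V'].
Definition fmap (W W' : Type) (f : W -> W') (V : fsum W) : fsum W' :=
  [seq (p.1, f p.2) | p <- V].
Definition fin_span (W : Type) (G : set W) (V : fsum W) : Prop :=
  forall p, List.In p V -> G p.2.

(* Cellular (based CW) spaces, Whitehead's definition.                 *)
Definition cdisk (R : realType) (n : nat) : set 'rV[R]_n :=
  [set v | \sum_(i < n) v ord0 i ^+ 2 <= 1].
Definition odisk (R : realType) (n : nat) : set 'rV[R]_n :=
  [set v | \sum_(i < n) v ord0 i ^+ 2 < 1].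
Definition sphere (R : realType) (n : nat) : set 'rV[R]_n :=
  [set v | \sum_(i < n) v ord0 i ^+ 2 = 1].
Arguments cdisk : clear implicits.
Arguments odisk : clear implicits.
Arguments sphere : clear implicits.

Definition cellular (R : realType) (X : topologicalType) (x0 : X) : Prop :=
  hausdorff_space X /\
  exists (J : Type) (dim : J -> nat) (Phi : forall j : J, 'rV[R]_(dim j) -> X),
    let cell j := Phi j @` odisk R (dim j) in
    (forall j, {within cdisk R (dim j), continuous (Phi j)}) /\
    (* Phi j restricted to the open disk is a homeomorphism onto the open cell *)
    (forall j, {in odisk R (dim j) &, injective (Phi j)}) /\
    (forall j (O : set 'rV[R]_(dim j)), open O ->
       exists O' : set X, open O' /\ Phi j @` (O `&` odisk R (dim j)) = cell j `&` O') /\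
    (forall x : X, exists j, cell j x) /\
    (forall j k x, cell j x -> cell k x -> j = k) /\
    (forall j v, sphere R (dim j) v ->
       exists k, (dim k < dim j)%N /\ cell k (Phi j v)) /\
    (forall j, exists ks : seq J,
       Phi j @` cdisk R (dim j) `<=` \bigcup_(k in [set k | List.In k ks]) cell k) /\
    (forall A : set X,
       closed A <-> forall j, closed (cdisk R (dim j) `&` Phi j @^-1` A)) /\
    (exists j, dim j = 0%N /\ cell j x0).

Section Spaces.
Variables (R : realType) (X Y : topologicalType) (x0 : X) (y0 : Y).

Definition bmap (f : X -> Y) : Prop := continuous f /\ f x0 = y0.

Definition pcomp (a : X -> Y) : set (X -> Y) :=
  [set f | bmap f /\ exists g : R -> @compact_open X Y,
      {within `[0, 1]%classic, continuous g} /\ g 0 = a /\ g 1 = f /\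
      (forall t, `[0, 1]%classic t -> bmap (g t))].

(* "junk" value taken outside the domain, so that maps from a subspace
   are represented canonically by total functions *)
Definition junk : X -> Y := fun _ => y0.

Definition pt (E : finType) := {ptws E -> R}.

Definition simplex (E : finType) (F : {set E}) : set (pt E) :=
  [set s | (forall e, 0 <= s e) /\ (forall e, e \notin F -> s e = 0) /\
           \sum_e s e = 1].

Definition layout (E : finType) (A : {set {set E}}) : Prop :=
  (forall F, F \in A -> F != finset.set0) /\
  (forall F G, F \in A -> G \in A -> F != G -> (F :&: G == finset.set0)).

Definition dunion (P : Type) (E : finType) (A : {set {set E}})
    (D : {set E} -> set P) : set P :=
  [set p | exists2 F, F \in A & D F p].

Definition restr (P : Type) (D : set P) (w : P -> X -> Y) : P -> X -> Y :=
  fun p => if `[< D p >] then w p else junk.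

Definition glue (P : Type) (E : finType) (A : {set {set E}})
    (D : {set E} -> set P) (fam : {set E} -> P -> X -> Y) : P -> X -> Y :=
  fun p => match [pick F in A | `[< D F p >]] with
           | Some F => fam F p | None => junk end.

(* multilinear expansion: all choices of one term of S F for each F in Fs *)
Definition fchoices (P : Type) (E : finType) (Fs : seq {set E})
    (S : {set E} -> fsum (P -> X -> Y)) : fsum ({set E} -> P -> X -> Y) :=
  foldr (fun F acc =>
     [seq (q.1 * c.1, fun F' => if F' == F then q.2 else c.2 F')
        | q <- S F, c <- acc])
    [:: (1%:Z, fun _ => fun _ => junk)] Fs.

Definition fglue (P : Type) (E : finType) (A : {set {set E}})
    (D : {set E} -> set P) (S : {set E} -> fsum (P -> X -> Y)) :
    fsum (P -> X -> Y) :=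
  fmap (glue A D) (fchoices (enum A) S).

Definition umap (E : finType) (D : set (pt E)) (Z : set (X -> Y))
    (w : pt E -> X -> Y) : Prop :=
  {within D, continuous (w : pt E -> @compact_open X Y)} /\
  (forall s, D s -> Z (w s)) /\ (forall s, ~ D s -> w s = junk).

Definition Xi (E : finType) (b : X -> Y) : pt E -> X -> Y :=
  restr (simplex [set: E]%SET) (fun _ => b).

Definition fissile (E : finType) (S : fsum (pt E -> X -> Y)) : Prop :=
  forall A : {set {set E}}, layout A ->
    feq (fmap (restr (dunion A (@simplex E))) S)
        (fglue A (@simplex E) (fun F => fmap (restr (simplex F)) S)).

(* <(Y^X)^{(Delta E)}>^{(s)}_X : V such that <#^X> V restricts to 0 on
   every finite R in Delta E wr X containing the basepoint with |R| <= s.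
   R = {basepoint} u {[u,x] : (u,x) in Q}, x <> x0; a based map on R is
   recorded by its values at the points of Q. *)
Definition filt (E : finType) (s : nat) (V : fsum (pt E -> X -> Y)) : Prop :=
  forall Q : seq (pt E * X),
    (forall q, List.In q Q -> simplex [set: E]%SET q.1 /\ q.2 <> x0) ->
    ((size Q).+1 <= s)%N ->
    fzero (fmap (fun w => fun i : 'I_(size Q) =>
                   w (tnth (in_tuple Q) i).1 (tnth (in_tuple Q) i).2) V).

Definition rapprox (r : nat) (a b : X -> Y) : Prop :=
  forall E : finType, (0 < #|E|)%N ->
    exists S : fsum (pt E -> X -> Y),
      fin_span (umap (simplex [set: E]%SET) (pcomp a)) S /\ fissile S /\
      filt r.+1 (fsub (fgen (@Xi E b)) S).

(* the cone over the subspace D of Delta E, as D x [0,1] (the collapse of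
   D x {0} to the apex is encoded by the basepoint condition below) *)
Definition cone (E : finType) (D : set (pt E)) : set (pt E * R) :=
  [set p | D p.1 /\ `[0, 1]%classic p.2].

Definition cmap (E : finType) (D : set (pt E)) (a : X -> Y)
    (h : pt E * R -> X -> Y) : Prop :=
  {within cone D, continuous (h : pt E * R -> @compact_open X Y)} /\
  (forall p, cone D p -> pcomp a (h p)) /\
  (forall s, D s -> h (s, 0) = a) /\
  (forall p, ~ cone D p -> h p = junk).

Definition cfissile (E : finType) (Rc : fsum (pt E * R -> X -> Y)) : Prop :=
  forall A : {set {set E}}, layout A ->
    feq (fmap (restr (cone (dunion A (@simplex E)))) Rc)
        (fglue A (fun F => cone (simplex F))
           (fun F => fmap (restr (cone (simplex F))) Rc)).

Definition base_restr (E : finType) (h : pt E * R -> X -> Y) : pt E -> X -> Y :=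
  restr (simplex [set: E]%SET) (fun s => h (s, 1)).

Definition firmly_similar (r : nat) (a b : X -> Y) : Prop :=
  forall E : finType, (0 < #|E|)%N ->
    exists Rc : fsum (pt E * R -> X -> Y),
      fin_span (cmap (simplex [set: E]%SET) a) Rc /\ cfissile Rc /\
      filt r.+1 (fsub (fgen (@Xi E b)) (fmap (@base_restr E) Rc)).

End Spaces.

From Pilot Require Import Defs.
From HB Require Import structures.
From mathcomp Require Import all_ssreflect all_algebra.
From mathcomp Require Import all_classical all_reals all_analysis.
Set Implicit Arguments. Unset Strict Implicit. Unset Printing Implicit Defensive.
Import Order.TTheory GRing.Theory Num.Theory.
Import numFieldNormedType.Exports numFieldTopology.Exports.
Local Open Scope classical_set_scope.
Local Open Scope ring_scope.

(* Proof: take S := R|_{Delta E}.  Restricting a based map C(Delta E) -> (Y^X_a, a)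
   to the base Delta E x {1} gives an unbased map Delta E -> Y^X_a, and this
   restriction commutes with restricting to Delta[A] (resp. to the wedge of
   cones over Delta[A]) and with gluing, hence with the multilinear products
   box-vee and box-sqcup; so S is fissile.  The filtration condition on
   <Xi(b)> - S is literally the one given by firm similarity. *)

Definition feval (W : Type) (c : W -> int) (V : fsum W) : int :=
  \sum_(p <- V) p.1 * c p.2.

Lemma fcoef_feval (W : Type) (V : fsum W) (w : W) :
  fcoef V w = feval (fun u => if `[< u = w >] then 1 else 0) V.
Proof. by apply: eq_bigr => p _; case: ifP; rewrite ?mulr1 ?mulr0. Qed.

Lemma feval_fsub (W : Type) (c : W -> int) (V V' : fsum W) :
  feval c (fsub V V') = feval c V - feval c V'.
Proof.
rewrite /feval big_cat big_map -sumrN; congr (_ + _).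
by apply: eq_bigr => p _; rewrite mulNr.
Qed.

Lemma fcoef_fsub (W : Type) (V V' : fsum W) (w : W) :
  fcoef (fsub V V') w = fcoef V w - fcoef V' w.
Proof. by rewrite !fcoef_feval feval_fsub. Qed.

(* W has no decidable equality, so argue by induction on the length: the
   terms carrying the first generator u contribute [fcoef V u * c u = 0], and
   removing them leaves a shorter null combination. *)
Lemma feval_fzero (W : Type) (c : W -> int) (V : fsum W) :
  fzero V -> feval c V = 0.
Proof.
move: {2}(size V) (leqnn (size V)) => n.
elim: n V => [|n IH] [|[k u] V] sizeV V0; rewrite /feval ?big_nil //.
pose P (p : int * W) := `[< p.2 = u >].
have coef_u : k + \sum_(p <- V | P p) p.1 = 0.
  by rewrite -[RHS](V0 u) /fcoef big_cons /= asboolT // big_mkcond.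
have sum_u : \sum_(p <- V | P p) p.1 * c p.2 = (\sum_(p <- V | P p) p.1) * c u.
  by rewrite mulr_suml; apply: eq_bigr => p /asboolP ->.
rewrite big_cons (bigID P) /= addrA sum_u -mulrDl coef_u mul0r add0r -big_filter.
apply: IH; first by rewrite size_filter (leq_trans (count_size _ _)).
move=> w; rewrite /fcoef big_filter.
have [->|neq_wu] := pselect (w = u).
  by rewrite big1 // => p /negP Pp; rewrite asboolF // => pu; apply/Pp/asboolP.
have := V0 w; rewrite /fcoef big_cons /= asboolF; last by move=> uw; apply: neq_wu.
rewrite add0r (bigID P) /= big1 ?add0r // => p /asboolP ->.
by rewrite asboolF // => uw; apply: neq_wu.
Qed.

Lemma feq_feval (W : Type) (c : W -> int) (V V' : fsum W) :
  feq V V' -> feval c V = feval c V'.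
Proof.
move=> eqVV'; apply/eqP; rewrite -subr_eq0 -feval_fsub; apply/eqP/feval_fzero.
by move=> w; rewrite fcoef_fsub eqVV' subrr.
Qed.

Lemma feq_fmap (W W' : Type) (f : W -> W') (V V' : fsum W) :
  feq V V' -> feq (Defs.fmap f V) (Defs.fmap f V').
Proof.
move=> eqVV' w; rewrite !fcoef_feval /feval !big_map.
exact: (feq_feval (fun u => if `[< f u = w >] then 1 else 0) eqVV').
Qed.

Lemma fmap_comp (W1 W2 W3 : Type) (f : W2 -> W3) (g : W1 -> W2) (V : fsum W1) :
  Defs.fmap f (Defs.fmap g V) = Defs.fmap (f \o g) V.
Proof. by rewrite /Defs.fmap -map_comp. Qed.

Lemma eq_fmap (W W' : Type) (f g : W -> W') : f =1 g -> Defs.fmap f =1 Defs.fmap g.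
Proof. by move=> eq_fg V; apply: eq_map => p; rewrite eq_fg. Qed.

Lemma in_fmap (W W' : Type) (f : W -> W') (V : fsum W) (p : int * W') :
  List.In p (Defs.fmap f V) -> exists2 q, List.In q V & p = (q.1, f q.2).
Proof.
elim: V => //= q V IH [<-|/IH [q' Vq' ->]]; first by exists q; [left|].
by exists q'; [right|].
Qed.

Lemma fchoices_fmap (X Y : topologicalType) (y0 : Y) (P P' : Type) (E : finType)
    (h : (P -> X -> Y) -> P' -> X -> Y) (S : {set E} -> fsum (P -> X -> Y))
    (Fs : seq {set E}) :
  h (fun _ => junk y0) = (fun _ => junk y0) ->
  fchoices y0 Fs (fun F => Defs.fmap h (S F)) =
  Defs.fmap (fun c F => h (c F)) (fchoices y0 Fs S).
Proof.
move=> h_junk; elim: Fs => [|F Fs IH] /=; first by rewrite /Defs.fmap /= h_junk.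
rewrite IH /Defs.fmap; elim: (S F) => //= q s IHs.
rewrite map_cat IHs; congr (_ ++ _).
rewrite -!map_comp; apply: eq_map => c /=; congr pair.
by apply: funext => F'; case: eqP.
Qed.

Lemma within_continuous_comp_subspace (T U V : topologicalType) (A : set T)
    (B : set U) (k : T -> U) (h : U -> V) :
  continuous k -> k @` A `<=` B -> {within B, continuous h} ->
  {within A, continuous (h \o k)}.
Proof.
move=> ck kAB /subspace_continuousP ch; apply/subspace_continuousP => x Ax W hW.
have := ch _ (kAB _ (imageP _ Ax)) W hW; rewrite /= /within /= !nbhs_simpl /=.
move=> /(ck x); rewrite nbhs_simpl /=.
by apply: filterS => y hBy Ay; exact/hBy/kAB/imageP.
Qed.

Section BaseRestriction.
Variables (R : realType) (X Y : topologicalType) (x0 : X) (y0 : Y) (E : finType).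

Local Notation Delta := (@simplex R E).
Local Notation base := (@base_restr R X Y y0 E).

Lemma simplex_subT (F : {set E}) : Delta F `<=` Delta [set: E]%SET.
Proof. by move=> s [s_ge0 [sF s1]]; split=> //; split=> // e; rewrite inE. Qed.

Lemma cone1 (D : set (pt R E)) (s : pt R E) : cone D (s, 1) <-> D s.
Proof. by split=> [[]|Ds] //; split=> //=; rewrite in_itv /= ler01 lexx. Qed.

Lemma base_restr_restr (D : set (pt R E)) (h : pt R E * R -> X -> Y) :
  D `<=` Delta [set: E]%SET -> base (restr y0 (cone D) h) = restr y0 D (base h).
Proof.
move=> DS; apply: funext => s; rewrite /base_restr /restr.
have [Ds|nDs] := pselect (D s).
  by rewrite (asboolT Ds) (asboolT (DS _ Ds)) asboolT //; apply/cone1.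
by rewrite (asboolF nDs); case: ifP => // _; rewrite asboolF // => /cone1.
Qed.

Lemma base_restr_junk : base (fun _ => junk y0) = (fun _ => junk y0).
Proof. by apply: funext => s; rewrite /base_restr /restr; case: ifP. Qed.

Lemma base_restr_glue (A : {set {set E}}) (c : {set E} -> pt R E * R -> X -> Y) :
  base (Defs.glue y0 A (fun F => cone (Delta F)) c) =
  Defs.glue y0 A Delta (fun F => base (c F)).
Proof.
apply: funext => s; rewrite /Defs.glue /base_restr /restr.
have [Ss|nSs] := pselect (Delta [set: E]%SET s); last first.
  by rewrite (asboolF nSs); case: pickP => // F /andP [_ /asboolP /simplex_subT].
rewrite (asboolT Ss) (@eq_pick _ _ [pred F | (F \in A) && `[< Delta F s >]]).
  by case: pickP => //= F _; rewrite (asboolT Ss).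
by move=> F /=; congr andb; apply/asboolP/asboolP => /cone1.
Qed.

Lemma base_restr_fglue (A : {set {set E}})
    (S : {set E} -> fsum (pt R E * R -> X -> Y)) :
  fglue y0 A Delta (fun F => Defs.fmap base (S F)) =
  Defs.fmap base (fglue y0 A (fun F => cone (Delta F)) S).
Proof.
rewrite /fglue fchoices_fmap; last exact: base_restr_junk.
by rewrite !fmap_comp; apply: eq_fmap => c /=; rewrite base_restr_glue.
Qed.

Lemma base_restr_fissile (Rc : fsum (pt R E * R -> X -> Y)) :
  cfissile y0 Rc -> fissile y0 (Defs.fmap base Rc).
Proof.
move=> Rc_fissile A A_layout.
have restr_base (D : set (pt R E)) : D `<=` Delta [set: E]%SET ->
    Defs.fmap (restr y0 D) (Defs.fmap base Rc) =
    Defs.fmap base (Defs.fmap (restr y0 (cone D)) Rc).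
  by move=> DS; rewrite !fmap_comp; apply: eq_fmap => h /=; rewrite base_restr_restr.
rewrite restr_base; last by move=> s [F _ /simplex_subT].
have -> : (fun F => Defs.fmap (restr y0 (Delta F)) (Defs.fmap base Rc)) =
    (fun F => Defs.fmap base (Defs.fmap (restr y0 (cone (Delta F))) Rc)).
  by apply: funext => F; rewrite restr_base //; apply: simplex_subT.
by rewrite base_restr_fglue; apply/feq_fmap/Rc_fissile.
Qed.

Lemma base_restr_umap (a : X -> Y) (h : pt R E * R -> X -> Y) :
  cmap x0 y0 (Delta [set: E]%SET) a h ->
  umap y0 (Delta [set: E]%SET) (Defs.pcomp R x0 y0 a) (base h).
Proof.
move=> [h_cont [h_pcomp _]]; split; [|split].
- have base_cont : {within Delta [set: E]%SET,
      continuous ((h : pt R E * R -> @compact_open X Y) \o (fun s => (s, 1)))}.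
    apply: (within_continuous_comp_subspace _ _ h_cont) => [s|_ [s Ss <-]].
      apply: (@cvg_pair _ _ _ (nbhs s) (nbhs s) (nbhs (1 : R))); [exact: cvg_id|exact: cvg_cst].
    exact/cone1.
  apply: (subspace_eq_continuous _ base_cont) => s /set_mem Ss.
  by rewrite /base_restr /restr /from_subspace /= asboolT.
- by move=> s Ss; rewrite /base_restr /restr asboolT //; apply/h_pcomp/cone1.
- by move=> s nSs; rewrite /base_restr /restr asboolF.
Qed.

End BaseRestriction.

Theorem lemma13p4 (R : realType) (X Y : topologicalType) (x0 : X) (y0 : Y)
  (r : nat) (a b : X -> Y) :
  cellular R x0 -> cellular R y0 -> compact (@setT X) ->
  bmap x0 y0 a -> bmap x0 y0 b ->
  firmly_similar R x0 y0 r a b -> rapprox R x0 y0 r a b.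
Proof.
move=> _ _ _ _ _ firm E E_gt0.
have [Rc [Rc_cmap [Rc_fissile Rc_filt]]] := firm E E_gt0.
exists (Defs.fmap (@base_restr R X Y y0 E) Rc); split; [|split] => //.
- by move=> _ /in_fmap [q Rq ->]; apply/base_restr_umap/Rc_cmap.
- exact: base_restr_fissile.
Qed.
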